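(* Consider the model below with $M=M_f=N=1$ and $\epsilon_2\ge0$, and let $\bar{\epsilon}_{RPE}\in[-\infty,\infty)$ be the number such that a restricted perceptions equilibrium (RPE) exists if and only if $\epsilon_1\ge\bar{\epsilon}_{RPE}$. If $\epsilon_1>\bar{\epsilon}_{RPE}$, then (i) there is exactly one E-stable RPE, and (ii) it is of type PP or of type ZP.
   Context: Parameters: $0<\beta<1$, $\sigma,\lambda,\mu>0$, $\psi>1$, $p,q\in(0,1]$ with $(p,q)\neq(1,1)$. The shock $\epsilon_t$ is a two-state Markov chain on $\{\epsilon_1,\epsilon_2\}$ with $\Pr(\epsilon_{t+1}=\epsilon_1\mid\epsilon_t=\epsilon_1)=p$, $\Pr(\epsilon_{t+1}=\epsilon_2\mid\epsilon_t=\epsilon_2)=q$; $\bar q:=(1-p)/(2-p-q)$. Model: $x_t=\hat E_t x_{t+1}-\sigma(i_t-\hat E_t\pi_{t+1})+\epsilon_t$, $\pi_t=\lambda x_t+\beta\hat E_t\pi_{t+1}$, $i_t=\max\{\psi\pi_t,-\mu\}$. An RPE is a pair $Y_j=(x_j,\pi_j)$, $j=1,2$, such that with $\bar Y=(\bar x,\bar\pi):=\bar qY_2+(1-\bar q)Y_1$ and $i_j=\max\{\psi\pi_j,-\mu\}$: $x_j=\bar x-\sigma(i_j-\bar\pi)+\epsilon_j$, $\pi_j=\lambda x_j+\beta\bar\pi$ for $j=1,2$. Types: the ZLB binds in state $j$ if $\psi\pi_j\le-\mu$; type PP (binds in no state), ZP (state 1 only), PZ (state 2 only), ZZ (both). Let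 $A_P=\frac{1}{1+\lambda\sigma\psi}\begin{pmatrix}1&\sigma-\beta\sigma\psi\\ \lambda&\beta+\lambda\sigma\end{pmatrix}$, $A_Z=\begin{pmatrix}1&\sigma\\ \lambda&\beta+\lambda\sigma\end{pmatrix}$, $I$ the $2\times2$ identity, and $DT^{PP}=A_P-I$, $DT^{ZP}=\bar qA_P+(1-\bar q)A_Z-I$, $DT^{PZ}=(1-\bar q)A_P+\bar qA_Z-I$, $DT^{ZZ}=A_Z-I$. An RPE of type $i$ is E-stable if all eigenvalues of $DT^i$ have negative real parts. *)

From HB Require Import structures.
From mathcomp Require Import all_boot all_order all_algebra.
From mathcomp Require Import reals.
From mathcomp.real_closed Require Import complex.
Set Implicit Arguments. Unset Strict Implicit. Unset Printing Implicit Defensive.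
Import Order.TTheory GRing.Theory Num.Theory.
Local Open Scope ring_scope.

Section Model.
Variable R : realType.

Record params := Params {
  beta : R; sigma : R; lambda : R; mu : R; psi : R; p : R; q : R }.

Definition admissible (P : params) : Prop :=
  [/\ 0 < beta P < 1, 0 < sigma P, 0 < lambda P, 0 < mu P & 1 < psi P] /\
  [/\ 0 < p P <= 1, 0 < q P <= 1 & ~ (p P = 1 /\ q P = 1)].

Definition qbar (P : params) : R := (1 - p P) / (2 - p P - q P).

Definition rate (P : params) (pi : R) : R := Num.max (psi P * pi) (- mu P).

Definition is_RPE (P : params) (eps1 eps2 x1 pi1 x2 pi2 : R) : Prop :=
  let xb := qbar P * x2 + (1 - qbar P) * x1 in
  let pib := qbar P * pi2 + (1 - qbar P) * pi1 in
  [/\ x1 = xb - sigma P * (rate P pi1 - pib) + eps1,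
      pi1 = lambda P * x1 + beta P * pib,
      x2 = xb - sigma P * (rate P pi2 - pib) + eps2 &
      pi2 = lambda P * x2 + beta P * pib].

Inductive rpe_type := PP | ZP | PZ | ZZ.

Definition binds (P : params) (pi : R) : bool := psi P * pi <= - mu P.

Definition type_of (P : params) (pi1 pi2 : R) : rpe_type :=
  match binds P pi1, binds P pi2 with
  | false, false => PP
  | true, false => ZP
  | false, true => PZ
  | true, true => ZZ
  end.

Definition A_P (P : params) : 'M[R]_2 :=
  (1 + lambda P * sigma P * psi P)^-1 *:
  \matrix_(i < 2, j < 2)
     (if i == 0 :> nat then (if j == 0 :> nat then 1 else sigma P - beta P * sigma P * psi P)
      else (if j == 0 :> nat then lambda P else beta P + lambda P * sigma P)).

Definition A_Z (P : params) : 'M[R]_2 :=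
  \matrix_(i < 2, j < 2)
     (if i == 0 :> nat then (if j == 0 :> nat then 1 else sigma P)
      else (if j == 0 :> nat then lambda P else beta P + lambda P * sigma P)).

Definition DT (P : params) (t : rpe_type) : 'M[R]_2 :=
  match t with
  | PP => A_P P - 1%:M
  | ZP => qbar P *: A_P P + (1 - qbar P) *: A_Z P - 1%:M
  | PZ => (1 - qbar P) *: A_P P + qbar P *: A_Z P - 1%:M
  | ZZ => A_Z P - 1%:M
  end.

Definition all_eig_neg_re (M : 'M[R]_2) : Prop :=
  forall z : R[i], eigenvalue (map_mx (fun x : R => x%:C%C) M) z -> complex.Re z < 0.

Definition E_stable_RPE (P : params) (eps1 eps2 x1 pi1 x2 pi2 : R) : Prop :=
  is_RPE P eps1 eps2 x1 pi1 x2 pi2 /\ all_eig_neg_re (DT P (type_of P pi1 pi2)).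

(* extended threshold in [-oo, +oo): None stands for -oo *)
Definition ge_thr (thr : option R) (e : R) : bool :=
  if thr is Some t then t <= e else true.
Definition gt_thr (thr : option R) (e : R) : bool :=
  if thr is Some t then t < e else true.

End Model.

From HB Require Import structures.
From mathcomp Require Import all_boot all_order all_algebra.
From mathcomp Require Import reals.
From mathcomp.real_closed Require Import complex.
From mathcomp Require Import ring lra.
Import Order.TTheory GRing.Theory Num.Theory.
Local Open Scope ring_scope.

(* An RPE is determined by its mean inflation y: in state j inflation is
   pi_j = infl u_j with u_j = (1 + lambda sigma) y + lambda eps_j, where
   infl u = min (u + lambda sigma mu, u / (1 + lambda sigma psi)) is concave and
   increasing, and y must be a zero of the concave piecewise affine map
   excess y = qbar pi_2 + (1 - qbar) pi_1 - y.  On each piece (ZLB regime) the matrix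
   DT is a convex combination of A_P - I and A_Z - I whose determinant is minus the
   slope of that piece and whose trace is negative as soon as the determinant is
   positive; so the E-stable RPEs are exactly the zeros of excess at which its active
   piece decreases.  A minimum of affine functions has at most one such zero, and has
   one if it is positive somewhere and some piece decreases (the PP piece always
   does).  Positivity somewhere comes from an RPE at a smaller eps1, since excess
   increases with eps1 when qbar < 1, and from a direct computation when qbar = 1.
   Finally the ZZ piece increases, and a decreasing PZ zero would force psi < 1
   when eps2 >= 0. *)

Section AffineEnvelope.
Context {F : realFieldType} {I : finType} {l : I -> F -> F} {s : I -> F}.
Variable act : F -> I.
Hypothesis l_affine : forall i x y, l i y = l i x + s i * (y - x).
Hypothesis act_min : forall i y, l (act y) y <= l i y.

Let h y := l (act y) y.

Lemma envelope_stable_root_unique a b :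
  h a = 0 -> s (act a) < 0 -> h b = 0 -> s (act b) < 0 -> a = b.
Proof.
suff no_later x y : h x = 0 -> s (act x) < 0 -> h y = 0 -> x < y -> False.
  move=> ha sa hb sb; case: (ltgtP a b) => // [ab|ba].
    by case: (no_later a b).
  by case: (no_later b a).
move=> hx sx hy xy; have := act_min (act x) y.
rewrite -/(h y) hy (l_affine _ x) -/(h x) hx add0r.
have : 0 < y - x by rewrite subr_gt0.
nra.
Qed.

Lemma envelope_stable_root_exists z :
  0 < h z -> (exists i, s i < 0) -> exists y, h y = 0 /\ s (act y) < 0.
Proof.
move=> hz [i0 si0].
have lz i : 0 < l i z by apply: lt_le_trans hz (act_min i z).
pose root i := z - l i z / s i.
have l_root i : s i < 0 -> l i (root i) = 0.
  move=> si; rewrite (l_affine _ z) /root; field; exact: ltr0_neq0.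
have z_root i : s i < 0 -> z < root i.
  move=> si; have : l i z / s i < 0 by rewrite pmulr_rlt0 ?invr_lt0.
  rewrite /root; lra.
case: (@arg_minP _ _ I i0 (fun i => s i < 0) root si0) => j sj root_min.
exists (root j).
have l_ge0 i : 0 <= l i (root j).
  case: (ltP (s i) 0) => si.
    rewrite (l_affine _ (root i)) l_root // add0r.
    have := root_min i si; rewrite -subr_le0; nra.
  rewrite (l_affine _ z); have := z_root j sj; have := lz i; nra.
have h0 : h (root j) = 0.
  by apply/eqP; rewrite eq_le l_ge0 andbT -(l_root j sj) act_min.
split => //; rewrite ltNge; apply/negP => sa.
move: h0; rewrite /h (l_affine _ z).
have := z_root j sj; have := lz (act (root j)); nra.
Qed.
End AffineEnvelope.

Lemma det_mx2 (F : comNzRingType) (A : 'M[F]_2) :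
  \det A = A 0 0 * A 1 1 - A 0 1 * A 1 0.
Proof.
rewrite (expand_det_row _ 0) !big_ord_recl big_ord0 /cofactor !det_mx11 !mxE /=.
rewrite /bump /= expr0 expr1 mul1r mulN1r addr0 mulrN.
have -> : lift 0 0 = 1 :> 'I_2 by apply: val_inj.
have -> : lift 1 0 = 0 :> 'I_2 by apply: val_inj.
by [].
Qed.

Lemma mxtrace_mx2 (F : comNzRingType) (A : 'M[F]_2) : \tr A = A 0 0 + A 1 1.
Proof.
rewrite /mxtrace !big_ord_recl big_ord0 addr0.
by rewrite (_ : lift ord0 ord0 = 1 :> 'I_2) //; apply: val_inj.
Qed.

Lemma eigenvalue_mx2 (F : fieldType) (A : 'M[F]_2) a :
  eigenvalue A a = (a ^+ 2 - \tr A * a + \det A == 0).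
Proof.
have /monicP := char_poly_monic A; rewrite /lead_coef size_char_poly => cp2.
rewrite eigenvalue_root_char /root horner_coef size_char_poly !big_ord_recr big_ord0 /=.
by rewrite cp2 (char_poly_trace A) // (char_poly_det A); congr (_ == 0); ring.
Qed.

Lemma quadratic_complex (R : rcfType) (x y T D : R) :
  ((x +i* y) ^+ 2 - T%:C * (x +i* y) + D%:C =
   (x ^+ 2 - y ^+ 2 - T * x + D) +i* ((2 * x - T) * y))%C.
Proof. by apply/eqP; rewrite eq_complex /=; apply/andP; split; apply/eqP; ring. Qed.

Lemma eigenvalue_real_mx2 (R : rcfType) (M : 'M[R]_2) (x y : R) :
  eigenvalue (map_mx (fun r : R => r%:C%C) M) (x +i* y)%C <->
  x ^+ 2 - y ^+ 2 - \tr M * x + \det M = 0 /\ (2 * x - \tr M) * y = 0.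
Proof.
rewrite eigenvalue_mx2 trace_map_mx det_map_mx quadratic_complex.
by split=> [/eqP[-> ->] | [-> ->]].
Qed.

Lemma neg_re_eig_mx2 (R : realType) (M : 'M[R]_2) :
  all_eig_neg_re M <-> \tr M < 0 /\ 0 < \det M.
Proof.
set T := \tr M; set D := \det M.
split=> [stable | [T_lt0 D_gt0] [x y] /eigenvalue_real_mx2 /=]; last first.
  rewrite -/T -/D => -[re0 im0].
  have [y0|y_neq0] := eqVneq y 0.
    move: re0; rewrite y0 expr0n /= subr0 => re0; nra.
  by move/eqP: im0; rewrite mulf_eq0 (negPf y_neq0) orbF subr_eq0 => /eqP; lra.
have [disc_ge0|disc_lt0] := leP 0 (T ^+ 2 - 4 * D).
  set s := Num.sqrt (T ^+ 2 - 4 * D).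
  have s_ge0 : 0 <= s := sqrtr_ge0 _.
  have s2 : s ^+ 2 = T ^+ 2 - 4 * D by rewrite sqr_sqrtr.
  have /stable /= : eigenvalue (map_mx (fun r : R => r%:C%C) M) ((T + s) / 2 +i* 0)%C.
    by apply/eigenvalue_real_mx2; rewrite mulr0; split => //; rewrite -/T -/D; nra.
  move=> root_lt0; split; nra.
set s := Num.sqrt (4 * D - T ^+ 2).
have s2 : s ^+ 2 = 4 * D - T ^+ 2 by rewrite sqr_sqrtr; lra.
have /stable /= : eigenvalue (map_mx (fun r : R => r%:C%C) M) (T / 2 +i* (s / 2))%C.
  by apply/eigenvalue_real_mx2; rewrite -/T -/D; split; nra.
move=> T_lt0; split; nra.
Qed.

Section Model.
Context {R : realType} {P : params R}.
Hypothesis adm : admissible P.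

Let beta_lt1 : beta P < 1. Proof. by case: adm => -[/andP[]]. Qed.
Let sigma_gt0 : 0 < sigma P. Proof. by case: adm => -[]. Qed.
Let lambda_gt0 : 0 < lambda P. Proof. by case: adm => -[]. Qed.
Let mu_gt0 : 0 < mu P. Proof. by case: adm => -[]. Qed.
Let psi_gt1 : 1 < psi P. Proof. by case: adm => -[]. Qed.
Let psi_gt0 : 0 < psi P. Proof. exact: lt_trans ltr01 psi_gt1. Qed.
Let ls_gt0 : 0 < lambda P * sigma P. Proof. exact: mulr_gt0. Qed.
Let lsp_gt0 : 0 < lambda P * sigma P * psi P. Proof. exact: mulr_gt0. Qed.

Let qbar_ge0_le1 : 0 <= qbar P <= 1.
Proof.
case: adm => _ [/andP[p_gt0 p_le1] /andP[q_gt0 q_le1] not_pq1].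
have den_gt0 : 0 < 2 - p P - q P.
  have [p1|/eqP p_neq1] := eqVneq (p P) 1; last by lra.
  have : q P <> 1 by move=> q1; apply: not_pq1.
  lra.
rewrite /qbar divr_ge0 ?ler_pdivrMr /=; lra.
Qed.

Definition den := 1 + lambda P * sigma P * psi P.
Definition gain := 1 + lambda P * sigma P.

Let gain_gt1 : 1 < gain. Proof. by rewrite /gain ltrDl. Qed.
Let den_gt0 : 0 < den. Proof. by rewrite /den addr_gt0. Qed.
Let den_neq0 : den != 0. Proof. exact: lt0r_neq0. Qed.

(* [pi_j = shadow e_j y - lambda sigma i_j] in an RPE with mean inflation [y]. *)
Definition shadow (e y : R) := gain * y + lambda P * e.

Definition zlb_at (u : R) : bool := psi P * u <= - (mu P * den).

Definition branch (z : bool) (u : R) :=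
  if z then u + lambda P * sigma P * mu P else u / den.

Definition infl (u : R) := branch (zlb_at u) u.

Definition output_gap (pi y : R) := (pi - beta P * y) / lambda P.

Lemma branch_ZP_le u : (branch true u <= branch false u) = zlb_at u.
Proof.
rewrite /= ler_pdivlMr // -subr_ge0 /zlb_at -[RHS]subr_ge0 -(pmulr_rge0 _ ls_gt0).
by congr (0 <= _); rewrite /den; ring.
Qed.

Lemma infl_min u : infl u = Num.min (branch true u) (branch false u).
Proof.
by rewrite /infl -branch_ZP_le; case: leP.
Qed.

Lemma infl_le_branch z u : infl u <= branch z u.
Proof. by rewrite infl_min; case: z; rewrite ge_min lexx ?orbT. Qed.

Lemma infl_lt : {homo infl : u v / u < v}.
Proof.
move=> u v uv; rewrite !infl_min lt_min !gt_min /= ltrD2r ltr_pM2r ?invr_gt0 // uv.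
by rewrite orbT.
Qed.

Lemma binds_infl u : binds P (infl u) = zlb_at u.
Proof.
rewrite /binds /infl /zlb_at /branch; case: ifP => [|/negbT]; rewrite /den.
  by move=> bind; apply/idP; nra.
rewrite -!ltNge => no_bind; apply/negbTE; rewrite -ltNge mulrA ltr_pdivlMr //.
by rewrite /den; nra.
Qed.

Lemma infl_add_rate u : infl u + lambda P * sigma P * rate P (infl u) = u.
Proof.
have := binds_infl u; rewrite /rate /binds /infl /branch.
case: ifP => _ bind; first by rewrite max_r ?bind //; ring.
by rewrite max_l ?ltW ?ltNge ?bind //; rewrite /den; field; rewrite -/den.
Qed.

Lemma add_rate_lt :
  {homo (fun pi => pi + lambda P * sigma P * rate P pi) : a b / a < b}.
Proof.
move=> a b ab /=; apply: ltr_leD => //; rewrite ler_pM2l // le_max2 //.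
by rewrite ler_pM2l // ltW.
Qed.

Lemma infl_eqP u pi : pi = u - lambda P * sigma P * rate P pi <-> pi = infl u.
Proof.
split=> [pi_eq | ->]; last by apply/eqP; rewrite eq_sym subr_eq infl_add_rate.
apply: (inc_inj (le_mono add_rate_lt)) => /=.
by rewrite infl_add_rate {1}pi_eq subrK.
Qed.

Lemma is_RPE_iff e1 e2 x1 pi1 x2 pi2 :
  let y := qbar P * pi2 + (1 - qbar P) * pi1 in
  is_RPE P e1 e2 x1 pi1 x2 pi2 <->
  [/\ x1 = output_gap pi1 y, x2 = output_gap pi2 y,
      pi1 = shadow e1 y - lambda P * sigma P * rate P pi1 &
      pi2 = shadow e2 y - lambda P * sigma P * rate P pi2].
Proof.
move=> y; rewrite /is_RPE -/y.
have lambda_neq0 : lambda P != 0 by exact: lt0r_neq0.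
have mean_gap : qbar P * output_gap pi2 y + (1 - qbar P) * output_gap pi1 y =
                (1 - beta P) * y / lambda P.
  by rewrite /output_gap /y; field.
split=> [[E1 E2 E3 E4] | [-> -> F1 F2]].
  have X1 : x1 = output_gap pi1 y by rewrite E2 /output_gap; field.
  have X2 : x2 = output_gap pi2 y by rewrite E4 /output_gap; field.
  rewrite -X1 -X2 in mean_gap; split => //.
    by rewrite {1}E2 {1}E1 mean_gap /shadow /gain; field.
  by rewrite {1}E4 {1}E3 mean_gap /shadow /gain; field.
rewrite mean_gap /output_gap; split; try by field.
  by rewrite {1}F1 /shadow /gain; field.
by rewrite {1}F2 /shadow /gain; field.
Qed.

Definition regime (e1 e2 y : R) : bool * bool :=
  (zlb_at (shadow e1 y), zlb_at (shadow e2 y)).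

(* [excess e1 e2 y] is [T y - y], where the T-map sends perceived mean inflation to
   the implied one; [excess_on e1 e2 z] is the same map with the ZLB regime frozen
   to [z] (state 1, state 2). *)
Definition excess_on (e1 e2 : R) (z : bool * bool) (y : R) :=
  qbar P * branch z.2 (shadow e2 y) + (1 - qbar P) * branch z.1 (shadow e1 y) - y.

Definition excess (e1 e2 y : R) := excess_on e1 e2 (regime e1 e2 y) y.

Lemma excess_infl e1 e2 y :
  excess e1 e2 y = qbar P * infl (shadow e2 y) + (1 - qbar P) * infl (shadow e1 y) - y.
Proof. by []. Qed.

Lemma is_RPE_excess e1 e2 x1 pi1 x2 pi2 :
  is_RPE P e1 e2 x1 pi1 x2 pi2 ->
  exists y, [/\ excess e1 e2 y = 0, pi1 = infl (shadow e1 y), pi2 = infl (shadow e2 y),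
                x1 = output_gap pi1 y & x2 = output_gap pi2 y].
Proof.
move/is_RPE_iff => [X1 X2 /infl_eqP pi1_infl /infl_eqP pi2_infl].
exists (qbar P * pi2 + (1 - qbar P) * pi1); split => //.
by rewrite excess_infl -pi1_infl -pi2_infl subrr.
Qed.

Lemma excess_is_RPE e1 e2 y : excess e1 e2 y = 0 ->
  let pi1 := infl (shadow e1 y) in let pi2 := infl (shadow e2 y) in
  is_RPE P e1 e2 (output_gap pi1 y) pi1 (output_gap pi2 y) pi2.
Proof.
move=> /eqP; rewrite excess_infl subr_eq0 => /eqP y_mean pi1 pi2.
by apply/is_RPE_iff; rewrite y_mean; split => //; apply/infl_eqP.
Qed.

Definition DT_of_weight (w : R) := w *: A_P P + (1 - w) *: A_Z P - 1%:M.

Lemma det_DT_of_weight w :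
  \det (DT_of_weight w) =
  gain * (w * (lambda P * sigma P * psi P) / den) - lambda P * sigma P.
Proof. by rewrite det_mx2 !mxE /= /gain /den; field; rewrite -/den. Qed.

Lemma DT_of_weight_stable (w : R) :
  0 <= w <= 1 -> all_eig_neg_re (DT_of_weight w) <-> 0 < \det (DT_of_weight w).
Proof.
move=> /andP[w_ge0 w_le1]; rewrite neg_re_eig_mx2 det_DT_of_weight.
pose k := w * (lambda P * sigma P * psi P) / den.
have k_ge0 : 0 <= k by rewrite /k divr_ge0 ?(ltW den_gt0) // mulr_ge0 // ltW.
have k_le1 : k <= 1 by rewrite /k ler_pdivrMr // mul1r /den; have := lsp_gt0; nra.
have -> : \tr (DT_of_weight w) = (1 - k) * (beta P + lambda P * sigma P) - 1 - k.
  by rewrite mxtrace_mx2 !mxE /= /k /den; field; rewrite -/den.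
rewrite -/k /gain; clearbody k; split=> [[] // | det_gt0]; split => //.
have := beta_lt1; have := ls_gt0; nra.
Qed.

Definition branch_slope (z : bool) := if z then 1 else den^-1.

Definition slope (z : bool * bool) :=
  gain * (qbar P * branch_slope z.2 + (1 - qbar P) * branch_slope z.1) - 1.

Definition taylor_weight (z : bool * bool) :=
  qbar P * (~~ z.2)%:R + (1 - qbar P) * (~~ z.1)%:R.

Definition type_of_regime (z : bool * bool) : rpe_type :=
  match z with
  | (false, false) => PP
  | (true, false) => ZP
  | (false, true) => PZ
  | (true, true) => ZZ
  end.

Lemma DT_regime z : DT P (type_of_regime z) = DT_of_weight (taylor_weight z).
Proof.
case: z => -[] [];
  rewrite /DT_of_weight /taylor_weight /= ?(mulr0, mulr1, addr0, add0r) //.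
- by rewrite subr0 scale0r add0r scale1r.
- by rewrite subKr.
- by rewrite subrKC subrr scale0r addr0 scale1r.
Qed.

Lemma slope_det z : slope z = - \det (DT_of_weight (taylor_weight z)).
Proof.
by rewrite det_DT_of_weight; case: z => -[] [];
  rewrite /slope /taylor_weight /branch_slope /gain /den /=; field; rewrite -/den.
Qed.

Lemma taylor_weight_ge0_le1 z : 0 <= taylor_weight z <= 1.
Proof.
case/andP: qbar_ge0_le1 => q_ge0 q_le1.
by case: z => -[] []; rewrite /taylor_weight /=; apply/andP; split; lra.
Qed.

Lemma DT_stable z : all_eig_neg_re (DT P (type_of_regime z)) <-> slope z < 0.
Proof.
by rewrite DT_regime DT_of_weight_stable ?taylor_weight_ge0_le1 // slope_det oppr_lt0.
Qed.

Lemma type_of_infl e1 e2 y :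
  type_of P (infl (shadow e1 y)) (infl (shadow e2 y)) =
  type_of_regime (regime e1 e2 y).
Proof. by rewrite /type_of /regime !binds_infl; case: zlb_at; case: zlb_at. Qed.

Lemma E_stable_RPE_excess e1 e2 x1 pi1 x2 pi2 :
  E_stable_RPE P e1 e2 x1 pi1 x2 pi2 ->
  exists2 y, excess e1 e2 y = 0 /\ slope (regime e1 e2 y) < 0 &
    [/\ pi1 = infl (shadow e1 y), pi2 = infl (shadow e2 y),
        x1 = output_gap pi1 y & x2 = output_gap pi2 y].
Proof.
case=> /is_RPE_excess[y [y_root -> -> -> ->]].
by rewrite type_of_infl DT_stable => y_stable; exists y.
Qed.

Lemma excess_E_stable e1 e2 y :
  excess e1 e2 y = 0 -> slope (regime e1 e2 y) < 0 ->
  let pi1 := infl (shadow e1 y) in let pi2 := infl (shadow e2 y) in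
  E_stable_RPE P e1 e2 (output_gap pi1 y) pi1 (output_gap pi2 y) pi2.
Proof.
move=> y_root y_stable; split; first exact: excess_is_RPE.
by rewrite type_of_infl DT_stable.
Qed.

Lemma excess_on_affine e1 e2 z x y :
  excess_on e1 e2 z y = excess_on e1 e2 z x + slope z * (y - x).
Proof.
by case: z => -[] []; rewrite /excess_on /slope /branch /branch_slope /shadow /=; field.
Qed.

Lemma excess_le_on e1 e2 z y : excess e1 e2 y <= excess_on e1 e2 z y.
Proof.
case/andP: qbar_ge0_le1 => q_ge0 q_le1.
by rewrite lerD2r lerD ?ler_wpM2l ?subr_ge0 ?infl_le_branch.
Qed.

Lemma slope_PP_lt0 : slope (false, false) < 0.
Proof.
rewrite /slope /branch_slope /= -mulrDl subrKC mul1r subr_lt0 ltr_pdivrMr // mul1r.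
by rewrite /gain /den ltrD2l ltr_pMr.
Qed.

Lemma slope_ZZ_gt0 : 0 < slope (true, true).
Proof. by rewrite /slope /branch_slope /= !mulr1 subrKC mulr1 /gain addrC addKr. Qed.

Lemma PZ_unstable e1 e2 y : 0 <= e2 -> excess e1 e2 y = 0 ->
  regime e1 e2 y = (false, true) -> 0 <= slope (false, true).
Proof.
move=> e2_ge0 y_root [zlb1 zlb2]; rewrite leNgt; apply/negP => slope_lt0.
case/andP: qbar_ge0_le1 => q_ge0 q_le1.
have q_gain_lt1 : qbar P * gain < 1.
  move: slope_lt0; rewrite /slope /branch_slope /= mulr1.
  have : 0 <= (1 - qbar P) / den by rewrite divr_ge0 ?subr_ge0 ?(ltW den_gt0).
  have := gain_gt1; nra.
have q_lt1 : qbar P < 1 by have := gain_gt1; nra.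
have pi1_free : - mu P < psi P * infl (shadow e1 y).
  by rewrite ltNge -/(binds P _) binds_infl zlb1.
have pi2_bound : psi P * infl (shadow e2 y) <= - mu P.
  by rewrite -/(binds P _) binds_infl zlb2.
have pi2_eq :
    infl (shadow e2 y) = gain * y + lambda P * e2 + lambda P * sigma P * mu P.
  by rewrite /infl zlb2.
move: y_root; rewrite excess_infl => /eqP; rewrite subr_eq0 eq_sym => /eqP y_mean.
move: (infl (shadow e1 y)) (infl (shadow e2 y)) y_mean pi1_free pi2_bound pi2_eq.
move=> pi1 pi2 y_mean pi1_free pi2_bound pi2_eq.
have pi2_lt_pi1 : pi2 < pi1 by rewrite -(ltr_pM2l psi_gt0); lra.
have y_le : y <= - mu P.
  have := mulr_ge0 (ltW lambda_gt0) e2_ge0.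
  rewrite /gain in pi2_eq; have := ls_gt0; nra.
have y_gain : y * (1 - qbar P * gain) =
    qbar P * (lambda P * e2 + lambda P * sigma P * mu P) + (1 - qbar P) * pi1.
  by rewrite mulrBr mulr1 {1}y_mean pi2_eq; ring.
have upper :
    psi P * (y * (1 - qbar P * gain)) <= psi P * (- mu P * (1 - qbar P * gain)).
  by rewrite ler_pM2l // ler_pM2r ?subr_gt0.
have lower : - ((1 - qbar P) * mu P) < (1 - qbar P) * (psi P * pi1).
  by rewrite -mulrN ltr_pM2l ?subr_gt0.
have e2_term :=
  mulr_ge0 (ltW psi_gt0) (mulr_ge0 q_ge0 (mulr_ge0 (ltW lambda_gt0) e2_ge0)).
have psi_gap : 0 < (1 - qbar P) * mu P * (psi P - 1) by rewrite !mulr_gt0 ?subr_gt0.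
(* [upper] and [lower] combine into [psi (1 - qbar) mu < (1 - qbar) mu]. *)
rewrite y_gain /gain in upper; lra.
Qed.

Lemma stable_regime_PP_ZP e1 e2 y : 0 <= e2 -> excess e1 e2 y = 0 ->
  slope (regime e1 e2 y) < 0 ->
  type_of_regime (regime e1 e2 y) = PP \/ type_of_regime (regime e1 e2 y) = ZP.
Proof.
move=> e2_ge0 y_root; case reg: (regime e1 e2 y) => [[] []] /= stable.
- by have := lt_trans stable slope_ZZ_gt0; rewrite ltxx.
- by right.
- by have := lt_le_trans stable (PZ_unstable _ _ _ e2_ge0 y_root reg); rewrite ltxx.
- by left.
Qed.

Lemma excess_lt_eps1 e e' e2 y :
  qbar P < 1 -> e < e' -> excess e e2 y < excess e' e2 y.
Proof.
move=> q_lt1 ee'; rewrite !excess_infl ltrD2r ltrD2l ltr_pM2l ?subr_gt0 //.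
by apply: infl_lt; rewrite /shadow ltrD2l ltr_pM2l.
Qed.

Lemma excess_qbar1_gt0 e1 e2 : qbar P = 1 -> 0 <= e2 -> 0 < excess e1 e2 (- mu P / 2).
Proof.
move=> q1 e2_ge0; rewrite excess_infl q1 subrr mul0r addr0 mul1r subr_gt0.
have le2_ge0 := mulr_ge0 (ltW lambda_gt0) e2_ge0.
have lsm_gt0 := mulr_gt0 ls_gt0 mu_gt0.
have lsmp_gt0 : 0 < lambda P * sigma P * mu P * (psi P - 1).
  by rewrite mulr_gt0 ?subr_gt0.
rewrite infl_min lt_min /= ltr_pdivlMr // /shadow /gain /den.
by apply/andP; split; lra.
Qed.

Lemma excess_gt0_of_RPE_below e e1 e2 : 0 <= e2 -> e < e1 ->
  (exists x1 pi1 x2 pi2, is_RPE P e e2 x1 pi1 x2 pi2) -> exists z, 0 < excess e1 e2 z.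
Proof.
move=> e2_ge0 e_lt [x1 [pi1 [x2 [pi2 /is_RPE_excess[y [y_root _ _ _ _]]]]]].
have [q1|q_neq1] := eqVneq (qbar P) 1.
  by exists (- mu P / 2); apply: excess_qbar1_gt0.
exists y; rewrite -y_root; apply: excess_lt_eps1 => //.
by rewrite lt_neqAle q_neq1; case/andP: qbar_ge0_le1.
Qed.

End Model.

Lemma gt_thr_below (R : realType) (thr : option R) e :
  gt_thr thr e -> exists2 e', ge_thr thr e' & e' < e.
Proof.
case: thr => [t /= t_lt | _]; last by exists (e - 1) => //; lra.
by exists ((t + e) / 2); rewrite /= ?ler_pdivlMr ?ltr_pdivrMr //; lra.
Qed.

Theorem proposition8 (R : realType) (P : params R) (eps2 : R)
  (eps_bar : option R) :
  admissible P -> 0 <= eps2 ->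
  (forall eps1 : R,
     (exists x1 pi1 x2 pi2, is_RPE P eps1 eps2 x1 pi1 x2 pi2) <->
     ge_thr eps_bar eps1) ->
  forall eps1 : R, gt_thr eps_bar eps1 ->
    exists x1 pi1 x2 pi2,
      [/\ E_stable_RPE P eps1 eps2 x1 pi1 x2 pi2,
          (forall y1 rho1 y2 rho2, E_stable_RPE P eps1 eps2 y1 rho1 y2 rho2 ->
             [/\ y1 = x1, rho1 = pi1, y2 = x2 & rho2 = pi2]) &
          type_of P pi1 pi2 = PP \/ type_of P pi1 pi2 = ZP].
Proof.
move=> adm e2_ge0 RPE_thr e1 /gt_thr_below[e e_thr e_lt].
have [z z_pos] :=
  excess_gt0_of_RPE_below adm e e1 eps2 e2_ge0 e_lt ((RPE_thr e).2 e_thr).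
have root_unique := envelope_stable_root_unique (regime e1 eps2)
  (excess_on_affine adm e1 eps2) (excess_le_on adm e1 eps2).
have [y [y_root y_stable]] := envelope_stable_root_exists (regime e1 eps2)
  (excess_on_affine adm e1 eps2) (excess_le_on adm e1 eps2) z z_pos
  (ex_intro _ (false, false) (slope_PP_lt0 adm)).
eexists _, _, _, _; split.
- exact: (excess_E_stable adm _ _ _ y_root y_stable).
- move=> y1 rho1 y2 rho2 /(E_stable_RPE_excess adm)[y' [y'_root y'_stable]].
  by rewrite (root_unique _ _ y'_root y'_stable y_root y_stable) => -[-> -> -> ->].
- by rewrite (type_of_infl adm); apply: (stable_regime_PP_ZP adm).
Qed.
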